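(* Let $1\le n\le L$. The map sending $w\in\Omega'^{\{1\}}$ to the collection of sets $B_1,\dots,B_n$, where $B_i\subseteq\{1,\dots,L\}$ is the set of positions of the letters $\bullet_i$ and $\Box_i$ in $w$, is a bijection from $\Omega'^{\{1\}}$ onto the set of (unordered) set partitions of $\{1,\dots,L\}$ into exactly $n$ nonempty blocks.
   Context: Particle labels are taken modulo $n$. $\Omega_{L,n}$ is the set of words $w_1\cdots w_L$ on the ring $\mathbb{Z}/L\mathbb{Z}$ over the alphabet $\{\bullet_1,\dots,\bullet_n,\Box_1,\dots,\Box_n\}$ in which each $\bullet_k$ occurs exactly once, the $\bullet_1,\dots,\bullet_n$ appear in this cyclic order, and the remaining $L-n$ letters are arbitrary $\Box_i$'s. For $w\in\Omega_{L,n}$ let $b_k$ be the position of $\bullet_k$ and $C_k$ the set of positions strictly between $b_k$ and $b_{k+1}$ going cyclically forward ($b_{n+1}=b_1$). For $i,k\in\{1,\dots,n\}$ set $w_\Box(i,k)=p_1\cdots p_{i-1}q_{i+1}\cdots q_kp_{k+1}\cdots p_n$ if $i\le k$ and $w_\Box(i,k)=q_1\cdots q_kp_{k+1}\cdots p_{i-1}q_{i+1}\cdots q_n$ if $k<i$ (empty products are $1$), monomials in indeterminates. The weight is the monomial $\mathrm{wt}(w)=\prod_{k=1}^n\prod_{j\in C_k}w_\Box(i_j,k)$ where $w_j=\Box_{i_j}$. $\Omega'^{\{1\}}$ is the set of $w\in\Omega_{L,n}$ with $w_1=\bullet_1$ whose weight monomial does not contain $q_1$ (i.e. $\mathrm{wt}(w)\ne0$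 when $q_1=0$ and all other rates are positive). *)

From mathcomp Require Import all_boot.
Set Implicit Arguments. Unset Strict Implicit. Unset Printing Implicit Defensive.

(* Letters: [inl k] is the particle bullet_{k+1}, [inr i] is the box Box_{i+1}
   (labels 0-indexed: label k : 'I_n stands for the paper's k+1).
   Positions 1..L of the ring Z/LZ are 'I_L (position j : 'I_L is the paper's j+1). *)
Definition letter (n : nat) := ('I_n + 'I_n)%type.
Definition word (L n : nat) := {ffun 'I_L -> letter n}.

Section Defs.
Variables (L n : nat).
Implicit Types (w : word L n).

Definition wseq w : seq (letter n) := [seq w j | j <- enum 'I_L].

Definition dotseq w : seq nat :=
  pmap (fun x : letter n => if x is inl k then Some (val k) else None) (wseq w).

Definition inOmega w : Prop :=
  (forall k : 'I_n, count_mem (inl k) (wseq w) = 1) /\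
  (exists r, dotseq w = rot r (iota 0 n)).

Definition bpos w (k : 'I_n) : nat := index (inl k) (wseq w).

Definition cdist (a b : nat) : nat := (b + L - a) %% L.

(* j in C_k : j strictly between b_k and b_{k+1} going cyclically forward
   (b_{n+1} = b_1; if b_{k+1} = b_k, i.e. n = 1, all positions except b_k) *)
Definition inC w (k : 'I_n) (j : nat) : bool :=
  (0 < cdist (bpos w k) j) &&
  ((cdist (bpos w k) j < cdist (bpos w k) (bpos w (ordS k)))
   || (bpos w (ordS k) == bpos w k)).

(* exponents of p_m and q_m in the monomial w_Box(i,k) (all 0-indexed) *)
Definition pexp (i k m : nat) : nat :=
  if i <= k then ((m < i) || (k < m)) else ((k < m) && (m < i)).
Definition qexp (i k m : nat) : nat :=
  if i <= k then ((i < m) && (m <= k)) else ((m <= k) || (i < m)).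

(* exponents of p_m and q_m in wt(w) = prod_k prod_{j in C_k} w_Box(i_j,k) *)
Definition wt_p w (m : 'I_n) : nat :=
  \sum_(j < L) \sum_(k < n)
     (if w j is inr i then (if inC w k j then pexp i k m else 0) else 0).
Definition wt_q w (m : 'I_n) : nat :=
  \sum_(j < L) \sum_(k < n)
     (if w j is inr i then (if inC w k j then qexp i k m else 0) else 0).

(* Omega'^{1}: w in Omega_{L,n}, w_1 = bullet_1, and q_1 does not divide wt(w) *)
Definition inOmega1 w : Prop :=
  inOmega w /\
  (forall (j : 'I_L) (k : 'I_n), val j = 0 -> val k = 0 -> w j = inl k) /\
  (forall m : 'I_n, val m = 0 -> wt_q w m = 0).

Definition block w (i : 'I_n) : {set 'I_L} :=
  [set j | (w j == inl i) || (w j == inr i)].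

Definition blocks w : {set {set 'I_L}} := [set block w i | i : 'I_n].

End Defs.

From mathcomp Require Import all_boot.
From mathcomp Require Import zify.
Set Implicit Arguments. Unset Strict Implicit. Unset Printing Implicit Defensive.

(* Write [b_k] for the position of bullet [k].  In a word of [Omega'^{1}] the condition
   [w_1 = bullet_1] together with the cyclic order forces [b_1 < ... < b_n], and since
   [q_1] divides [w_Box(i,k)] exactly when [k < i], the absence of [q_1] in the weight
   says that every [Box_i] lies in a gap [C_k] with [i <= k], i.e. after [bullet_i].
   So [bullet_i] marks the first element of the block [B_i], and the blocks are
   numbered in the order of their first elements.  Conversely, numbering the blocks of
   a set partition by their least elements and putting [bullet_i] at the least element
   of the [i]-th block and [Box_i] elsewhere in it gives such a word, and the two
   constructions are mutually inverse. *)

Lemma cdistE L a b : a < L -> b < L -> cdist L a b = if a <= b then b - a else b + L - a.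
Proof.
move=> aL bL; rewrite /cdist; case: leqP => ab; last by rewrite modn_small; lia.
by rewrite (_ : b + L - a = b - a + L) ?modnDr ?modn_small; lia.
Qed.

Lemma card_ltn_ord p k : k <= p -> #|[set i : 'I_p | i < k]| = k.
Proof. by move=> kp; rewrite -sum1dep_card (big_ord_narrow kp) sum1_card card_ord. Qed.

Section Words.
Variables (l m : nat).
Local Notation L := l.+1.
Local Notation n := m.+1.
Implicit Types (w : word L n).

Definition label (x : letter n) : 'I_n := match x with inl a => a | inr a => a end.

Definition is_dot (x : letter n) : bool := if x is inl _ then true else false.

Definition dot_label (x : letter n) : option nat := if x is inl k then Some (val k) else None.

Definition dot_lt (x y : letter n) : bool :=
  if (x, y) is (inl a, inl b) then a < b else true.

Definition dots_increasing w := forall x y : 'I_L, x < y -> dot_lt (w x) (w y).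

Record restricted w : Prop := Restricted {
  dot_complete : forall k : 'I_n, exists j, w j = inl k;
  dot_increasing : dots_increasing w;
  box_after_dot : forall j i, w j = inr i -> exists2 j' : 'I_L, j' < j & w j' = inl i
}.

Lemma wseqE w : wseq w = [seq w (inord x) | x <- iota 0 L].
Proof.
by rewrite /wseq -val_enum_ord -map_comp; apply: eq_map => j /=; rewrite inord_val.
Qed.

Lemma pairwise_dot_lt (s : seq (letter n)) :
  pairwise dot_lt s = pairwise ltn (pmap dot_label s).
Proof.
elim: s => //= [[k|i] s IH]; rewrite /= IH; last by rewrite (@eq_all _ _ predT) ?all_predT.
congr (_ && _); elim: s {IH} => //= [[k'|i'] s IH]; by rewrite /= IH.
Qed.

Lemma dots_increasingP w : dots_increasing w <-> sorted ltn (dotseq w).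
Proof.
rewrite sorted_pairwise; last exact: ltn_trans.
rewrite /dotseq -pairwise_dot_lt wseqE; split.
- move=> incr; apply/(pairwiseP (inl ord0)) => x y.
  rewrite !inE size_map size_iota => xL yL xy.
  by rewrite !(nth_map 0) ?size_iota // !nth_iota //; apply: incr; rewrite !inordK.
- move/(pairwiseP (inl ord0)) => incr x y xy.
  have := incr x y; rewrite !inE size_map size_iota !(nth_map 0) ?size_iota // !nth_iota //.
  by rewrite !inord_val; apply.
Qed.

Section Increasing.
Variable w : word L n.
Hypothesis incr : dots_increasing w.

Lemma dot_ltE (x y : 'I_L) a b : w x = inl a -> w y = inl b -> (x < y) = (a < b).
Proof.
move=> wx wy; case: (ltngtP x y) => [xy|yx|/val_inj exy].
- by have := incr xy; rewrite wx wy.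
- by have := incr yx; rewrite wx wy /= => /ltnW; rewrite leqNgt => /negbTE.
- by move: wx; rewrite exy wy => -[->]; rewrite ltnn.
Qed.

Lemma dot_inj (x y : 'I_L) k : w x = inl k -> w y = inl k -> x = y.
Proof.
move=> wx wy; apply/val_inj/eqP.
by rewrite eqn_leq leqNgt (dot_ltE wy wx) ltnn leqNgt (dot_ltE wx wy) ltnn.
Qed.

Lemma bpos_dot (b : 'I_L) k : w b = inl k -> bpos w k = b.
Proof.
move=> wb; have mem : inl k \in wseq w by apply/mapP; exists b; rewrite ?mem_enum.
have iL : bpos w k < L.
  by have := index_mem (inl k) (wseq w); rewrite mem size_map size_enum_ord.
have := nth_index (inl k) mem; rewrite -/(bpos w k) wseqE (nth_map 0) ?size_iota //.
by rewrite nth_iota // => /dot_inj/(_ wb) <-; rewrite inordK.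
Qed.

End Increasing.

Section CompleteIncreasing.
Variable w : word L n.
Hypotheses (complete : forall k : 'I_n, exists j, w j = inl k) (incr : dots_increasing w).

Lemma bpos_lt_L k : bpos w k < L.
Proof. by have [b /(bpos_dot incr) ->] := complete k. Qed.

Lemma bpos_ltE a b : (bpos w a < bpos w b) = (a < b).
Proof.
have [x wx] := complete a; have [y wy] := complete b.
by rewrite (bpos_dot incr wx) (bpos_dot incr wy) (dot_ltE incr wx wy).
Qed.

Lemma bpos_leE a b : (bpos w a <= bpos w b) = (a <= b).
Proof. by rewrite leqNgt bpos_ltE -leqNgt. Qed.

Hypothesis w0 : w ord0 = inl ord0.

(* Once [b_1 = 0] and the bullets are in increasing order, the cyclic gaps are
   ordinary intervals, the last one running up to [L]. *)
Lemma inC_dotsE (k : 'I_n) (j : 'I_L) :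
  inC w k j = (bpos w k < j) && ((k == ord_max) || (j < bpos w (ordS k))).
Proof.
have b0 : bpos w ord0 = 0 := bpos_dot incr w0.
have bkL := bpos_lt_L k; have bSL := bpos_lt_L (ordS k); have jL := ltn_ord j.
rewrite /inC !cdistE //.
have [km | km] := ltnP k m.
- have lt : bpos w k < bpos w (ordS k) by rewrite bpos_ltE /= modn_small.
  have -> : (k == ord_max) = false by apply/negbTE; rewrite -val_eqE /= neq_ltn km.
  by rewrite (ltnW lt); case: (leqP (bpos w k) j) => ?; lia.
- have ek : k = m :> nat by have := ltn_ord k; lia.
  have -> : ordS k = ord0 by apply: val_inj; rewrite /= ek modnn.
  have -> : k == ord_max by rewrite -val_eqE /= ek.
  rewrite b0; case: (leqP (bpos w k) j) => ?; case: (leqP (bpos w k) 0) => ?; lia.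
Qed.

Lemma box_in_gap (j : 'I_L) i : w j = inr i -> exists k, inC w k j.
Proof.
move=> wj; have b0 : bpos w ord0 < j.
  rewrite (bpos_dot incr w0) lt0n; apply/negP => /eqP j0.
  by move: wj; rewrite (_ : j = ord0) ?w0 //; apply: val_inj.
have [k bk kmax] := @arg_maxnP _ ord0 (fun k => bpos w k < j) val b0.
exists k; rewrite inC_dotsE bk /=.
have [km | km] := ltnP k m; last by rewrite -val_eqE /= eqn_leq km -ltnS ltn_ord.
have Sk : val (ordS k) = k.+1 by rewrite /= modn_small.
have : ~~ (bpos w (ordS k) < j) by apply/negP => /kmax; rewrite Sk /= ltnn.
have [b wb] := complete (ordS k); rewrite (bpos_dot incr wb) -leqNgt leq_eqVlt.
case/orP => [/eqP/val_inj ejb|->]; last by rewrite orbT.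
by move: wj; rewrite ejb wb.
Qed.

End CompleteIncreasing.

Lemma qexp_0 i k : qexp i k 0 = (k < i).
Proof. by rewrite /qexp; case: (leqP i k). Qed.

Lemma wt_q_eq0P w (q : 'I_n) :
  wt_q w q = 0 <-> forall (j : 'I_L) (k : 'I_n) i, w j = inr i -> inC w k j -> qexp i k q = 0.
Proof.
rewrite /wt_q; split.
- move/eqP; rewrite sum_nat_eq0 => /forallP sum0 j k i wj jk.
  by have := sum0 j; rewrite /= sum_nat_eq0 => /forallP/(_ k); rewrite wj jk => /eqP.
- move=> q0; apply/eqP; rewrite sum_nat_eq0; apply/forallP => j /=.
  rewrite sum_nat_eq0; apply/forallP => k /=.
  by case wj: (w j) => [//|i]; case: ifP => // jk; rewrite (q0 j k i wj jk).
Qed.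

Lemma inOmega1_dotseq w : inOmega1 w -> dotseq w = iota 0 n.
Proof.
case=> [[_ [r dotsE]] [w0 _]].
have {}w0 : w ord0 = inl ord0 by apply: w0.
have [rn | nr] := ltnP r n; last by rewrite dotsE rot_oversize ?size_iota.
suff r0 : r = 0 by rewrite dotsE r0 rot0.
have : head 0 (dotseq w) = 0 by rewrite /dotseq /wseq enum_ordSl /= w0.
rewrite dotsE /rot drop_iota add0n.
by case: (n - r) (subn_gt0 r n) => [|d]; rewrite ?rn.
Qed.

Lemma inOmega1_restricted w : inOmega1 w -> restricted w.
Proof.
move=> wO; have [[count1 _] [w0 noq]] := wO.
have {}w0 : w ord0 = inl ord0 by apply: w0.
have complete k : exists j, w j = inl k.
  have : inl k \in wseq w by rewrite -has_pred1 has_count count1.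
  by case/mapP => j _ ->; exists j.
have incr : dots_increasing w.
  by apply/dots_increasingP; rewrite inOmega1_dotseq // iota_ltn_sorted.
split=> // j i wj.
have [k jk] := box_in_gap complete incr w0 wj.
have /wt_q_eq0P/(_ j k i wj jk) := noq ord0 erefl.
rewrite qexp_0 => /eqP; rewrite eqb0 -leqNgt -(bpos_leE complete incr) => bik.
have [b wb] := complete i; exists b => //.
rewrite -(bpos_dot incr wb); apply: leq_ltn_trans bik _.
by move: jk; rewrite inC_dotsE // => /andP[].
Qed.

Lemma blockE w i j : (j \in block w i) = (label (w j) == i).
Proof. by rewrite inE; case: (w j) => a /=; rewrite ?orbF. Qed.

Lemma blocks_partition w : (forall i, exists j, label (w j) = i) ->
  partition (blocks w) [set: 'I_L] /\ #|blocks w| = n.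
Proof.
move=> onto; have [] := @indexed_partition _ _ predT (block w).
- move=> i i' _ _ ne; rewrite -setI_eq0; apply/eqP/setP => j.
  by rewrite inE !blockE in_set0; apply: contraNF ne => /andP[/eqP<- /eqP<-].
- by move=> i _; have [j ji] := onto i; apply/set0Pn; exists j; rewrite blockE ji.
move=> part inj; split; last by rewrite card_in_imset // card_ord.
suff <- : cover (blocks w) = [set: 'I_L] by [].
apply/eqP; rewrite eqEsubset subsetT; apply/subsetP => j _.
by apply/bigcupP; exists (block w (label (w j))); rewrite ?imset_f ?blockE.
Qed.

Section CanonicalWord.
Variable P : {set {set 'I_L}}.
Hypotheses (partP : partition P [set: 'I_L]) (cardP : #|P| = n).
Let trivP := partition_trivIset partP.

Definition first_pos (j : 'I_L) : 'I_L := [arg min_(j' < j in pblock P j) val j'].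
Definition leader j := first_pos j == j.
Definition rank j := #|[set y | leader y & y < first_pos j]|.

Definition canonical_word : word L n :=
  [ffun j => if leader j then inl (inord (rank j)) else inr (inord (rank j))].

Lemma mem_pblock_self j : j \in pblock P j.
Proof. by rewrite mem_pblock (cover_partition partP) inE. Qed.

Lemma first_pos_mem j : first_pos j \in pblock P j.
Proof. by rewrite /first_pos; case: arg_minnP => //; exact: mem_pblock_self. Qed.

Lemma first_pos_le j y : y \in pblock P j -> first_pos j <= y.
Proof.
by rewrite /first_pos; case: arg_minnP => [|x _ xmin]; [exact: mem_pblock_self | exact: xmin].
Qed.

Lemma first_posE j b :
  b \in pblock P j -> (forall y, y \in pblock P j -> b <= y) -> first_pos j = b.
Proof.
by move=> bj bmin; apply/val_inj/eqP; rewrite eqn_leq first_pos_le ?bmin ?first_pos_mem.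
Qed.

Lemma first_pos_same j y : y \in pblock P j -> first_pos y = first_pos j.
Proof.
move=> yj; have e := same_pblock trivP yj.
by apply: first_posE; rewrite e; [exact: first_pos_mem | exact: first_pos_le].
Qed.

Lemma pblock_first_pos j : pblock P (first_pos j) = pblock P j.
Proof. exact: same_pblock trivP (first_pos_mem j). Qed.

Lemma leader_first_pos j : leader (first_pos j).
Proof. by rewrite /leader (first_pos_same (first_pos_mem j)). Qed.

Lemma rank_first_pos j : rank (first_pos j) = rank j.
Proof. by rewrite /rank (eqP (leader_first_pos j)). Qed.

Lemma leader_eq a b : leader a -> leader b -> b \in pblock P a -> a = b.
Proof. by move=> /eqP la /eqP lb /first_pos_same; rewrite la lb => ->. Qed.

Lemma rank_lt j y : first_pos j < first_pos y -> rank j < rank y.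
Proof.
move=> lt; apply: proper_card; apply/properP; split.
  by apply/subsetP => x; rewrite !inE => /andP[-> xj]; exact: ltn_trans xj lt.
by exists (first_pos j); rewrite !inE leader_first_pos ?lt ?ltnn.
Qed.

Lemma rank_eq j y : (rank j == rank y) = (y \in pblock P j).
Proof.
apply/eqP/idP => [ejy | yj]; last by rewrite /rank (first_pos_same yj).
have efirst : first_pos j = first_pos y.
  case: (ltngtP (first_pos j) (first_pos y)) => [/rank_lt|/rank_lt|/val_inj //].
    by rewrite ejy ltnn.
  by rewrite ejy ltnn.
by rewrite -pblock_first_pos efirst pblock_first_pos mem_pblock_self.
Qed.

Lemma card_leaders : #|[set j | leader j]| = n.
Proof.
have leadersP : pblock P @: [set j | leader j] = P.
  apply/setP => B; apply/imsetP/idP => [[j _ ->] | BP].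
    by rewrite pblock_mem // (cover_partition partP) inE.
  have /set0Pn[x xB] := partition_neq0 partP BP.
  exists (first_pos x); first by rewrite inE leader_first_pos.
  by rewrite pblock_first_pos (def_pblock trivP BP xB).
rewrite -cardP -leadersP card_in_imset // => a b; rewrite !inE => la lb e.
by apply: leader_eq; rewrite // e mem_pblock_self.
Qed.

Lemma rank_lt_n j : rank j < n.
Proof.
rewrite -card_leaders; apply: proper_card; apply/properP; split.
  by apply/subsetP => x; rewrite !inE => /andP[].
by exists (first_pos j); rewrite !inE leader_first_pos ?ltnn.
Qed.

Lemma rank_onto (k : 'I_n) : exists2 j, leader j & rank j = k.
Proof.
pose f j : 'I_n := inord (rank j).
have f_inj : {in [set j | leader j] &, injective f}.
  move=> a b; rewrite !inE => la lb /(congr1 val); rewrite /= !inordK ?rank_lt_n //.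
  by move/eqP; rewrite rank_eq; exact: leader_eq la lb.
have : k \in f @: [set j | leader j].
  suff -> : f @: [set j | leader j] = [set: 'I_n] by rewrite in_setT.
  by apply/eqP; rewrite eqEcard subsetT cardsT card_ord card_in_imset // card_leaders leqnn.
by case/imsetP => j; rewrite inE => lj ->; exists j; rewrite ?inordK ?rank_lt_n.
Qed.

Lemma label_canonical_word j : label (canonical_word j) = inord (rank j).
Proof. by rewrite ffunE; case: ifP. Qed.

Lemma canonical_word_restricted : restricted canonical_word.
Proof.
split.
- by move=> k; have [j lj rk] := rank_onto k; exists j; rewrite ffunE lj rk inord_val.
- move=> x y xy; rewrite !ffunE; case lx: (leader x); case ly: (leader y) => //=.
  by rewrite /dot_lt !inordK ?rank_lt_n //; apply: rank_lt; rewrite (eqP lx) (eqP ly).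
- move=> j i; rewrite ffunE; case lj: (leader j) => // -[ri].
  exists (first_pos j); last by rewrite ffunE leader_first_pos rank_first_pos ri.
  by rewrite ltn_neqAle (inj_eq val_inj) -/(leader j) lj first_pos_le ?mem_pblock_self.
Qed.

Lemma blocks_canonical_word : blocks canonical_word = P.
Proof.
apply/setP => B; apply/imsetP/idP => [[i _ ->] | BP].
- have [j lj rj] := rank_onto i.
  suff -> : block canonical_word i = pblock P j.
    by rewrite pblock_mem // (cover_partition partP) inE.
  apply/setP => x; rewrite blockE label_canonical_word -(inj_eq val_inj) /=.
  by rewrite inordK ?rank_lt_n // -rj eq_sym rank_eq.
- have /set0Pn[x xB] := partition_neq0 partP BP.
  exists (inord (rank x)) => //; apply/setP => y.
  rewrite blockE label_canonical_word -(inj_eq val_inj) /= !inordK ?rank_lt_n //.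
  by rewrite eq_sym rank_eq (def_pblock trivP BP xB).
Qed.

End CanonicalWord.

Section Restricted.
Variable w : word L n.
Hypothesis rw : restricted w.
Let complete := dot_complete rw.
Let incr := dot_increasing rw.

Lemma restricted_head : w ord0 = inl ord0.
Proof.
case w0: (w ord0) => [k|i]; last by case: (box_after_dot rw w0).
have [j wj] := complete ord0; have [j0 | j0] := posnP j.
  by move: wj; rewrite (_ : j = ord0) ?w0 //; exact: val_inj.
by have := incr (j0 : ord0 < j); rewrite w0 wj.
Qed.

Lemma box_label_le j k i : w j = inr i -> inC w k j -> i <= k.
Proof.
move=> wj; rewrite (inC_dotsE complete incr restricted_head) => /andP[_].
apply: contraLR; rewrite -ltnNge negb_or => ki.
have [b bj wb] := box_after_dot rw wj.
have km : k < m by have := ltn_ord i; lia.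
rewrite -val_eqE /= neq_ltn km /= -leqNgt; apply: leq_trans (ltnW bj).
by rewrite -(bpos_dot incr wb) bpos_leE //= modn_small.
Qed.

Lemma restricted_inOmega1 : inOmega1 w.
Proof.
have w0 := restricted_head.
split; [split|split].
- move=> k; have [b wb] := complete k.
  rewrite /wseq count_map (@eq_count _ _ (pred1 b)) ?count_uniq_mem ?enum_uniq ?mem_enum //.
  by move=> j /=; apply/eqP/eqP => [/(dot_inj incr)/(_ wb) | ->].
- exists 0; rewrite rot0; apply: (irr_sorted_eq ltn_trans ltnn).
  + exact/dots_increasingP.
  + exact: iota_ltn_sorted.
  move=> x; rewrite mem_iota add0n /= /dotseq mem_pmap; apply/mapP/idP.
    by case=> [[k|//] _ [->]]; exact: ltn_ord.
  move=> xn; have [j wj] := complete (Ordinal xn); exists (w j); last by rewrite wj.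
  by rewrite /wseq map_f ?mem_enum.
- move=> j k j0 k0; have -> : j = ord0 by exact: val_inj.
  by have -> : k = ord0 by exact: val_inj.
- move=> q q0; apply/wt_q_eq0P => j k i wj jk; rewrite q0 qexp_0.
  by apply/eqP; rewrite eqb0 -leqNgt (box_label_le wj jk).
Qed.

Lemma restricted_blocks_partition : partition (blocks w) [set: 'I_L] /\ #|blocks w| = n.
Proof. by apply: blocks_partition => i; have [j wj] := complete i; exists j; rewrite wj. Qed.

Let partB := restricted_blocks_partition.1.

Lemma pblock_blocks j : pblock (blocks w) j = block w (label (w j)).
Proof.
apply: def_pblock; [exact: partition_trivIset partB | exact: imset_f | by rewrite blockE].
Qed.

Lemma first_pos_blocks j : w (first_pos (blocks w) j) = inl (label (w j)).
Proof.
have [b wb] := complete (label (w j)).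
suff -> : first_pos (blocks w) j = b by [].
apply: (first_posE partB) => [|y]; rewrite pblock_blocks blockE; first by rewrite wb /=.
move=> /eqP ly; case wy: (w y) => [k|i]; move: ly; rewrite wy /= => ek.
  have wbk : w b = inl k by rewrite wb ek.
  by rewrite (dot_inj incr wy wbk) leqnn.
have wbi : w b = inl i by rewrite wb ek.
have [b' b'y wb'] := box_after_dot rw wy.
by rewrite -(dot_inj incr wb' wbi) ltnW.
Qed.

Lemma leader_blocks j : leader (blocks w) j = is_dot (w j).
Proof.
rewrite /leader; have := first_pos_blocks j; case wj: (w j) => [k|i] /= wf.
  by rewrite (dot_inj incr wf wj) eqxx.
by apply/negbTE/eqP => e; move: wf; rewrite e wj.
Qed.

Lemma rank_blocks j : rank (blocks w) j = label (w j).
Proof.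
have wf := first_pos_blocks j.
pose S := [set y | leader (blocks w) y & y < first_pos (blocks w) j].
have imS : (fun y => label (w y)) @: S = [set k : 'I_n | k < label (w j)].
  apply/setP => k; rewrite inE; apply/imsetP/idP => [[y] | kj].
    rewrite inE leader_blocks; case wy: (w y) => [k'|] //= yj ->.
    by rewrite -(dot_ltE incr wy wf).
  have [y wy] := complete k; exists y; last by rewrite wy.
  by rewrite inE leader_blocks wy /= (dot_ltE incr wy wf).
rewrite /rank -/S -[RHS](card_ltn_ord (ltnW (ltn_ord (label (w j))))) -imS.
rewrite card_in_imset // => x y; rewrite !inE !leader_blocks.
case wx: (w x) => [a|] //=; case wy: (w y) => [b|] //= _ _ eab.
by apply: (dot_inj incr wx); rewrite wy eab.
Qed.

Lemma canonical_word_blocks : canonical_word (blocks w) = w.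
Proof.
by apply/ffunP => j; rewrite ffunE leader_blocks rank_blocks inord_val; case: (w j).
Qed.

End Restricted.

End Words.

Theorem proposition5p6 (L n : nat) (hn : 1 <= n) (hnL : n <= L) :
  (forall w : word L n, inOmega1 w ->
     partition (blocks w) [set: 'I_L] /\ #|blocks w| = n) /\
  (forall w1 w2 : word L n, inOmega1 w1 -> inOmega1 w2 ->
     blocks w1 = blocks w2 -> w1 = w2) /\
  (forall P : {set {set 'I_L}}, partition P [set: 'I_L] -> #|P| = n ->
     exists w : word L n, inOmega1 w /\ blocks w = P).
Proof.
case: n hn hnL => [//|m] _; case: L => [//|l] _.
split; [|split].
- by move=> w /inOmega1_restricted; exact: restricted_blocks_partition.
- move=> w1 w2 /inOmega1_restricted r1 /inOmega1_restricted r2 e12.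
  by rewrite -(canonical_word_blocks r1) -(canonical_word_blocks r2) e12.
- move=> P partP cardP; exists (canonical_word m P); split.
    exact/restricted_inOmega1/canonical_word_restricted.
  exact: blocks_canonical_word.
Qed.
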